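(* Let $n$ and $N$ be non-negative integers with $N\le 2n-3$. Suppose $f_0,f_1,\dots,f_N$ is a sequence of positive integers such that (1) $f_0=2$, (2) $f_i=f_{i-1}\pm1$ for $1\le i\le N$, and (3) $f_i\le 2n-i-2$ for $0\le i\le N$. Then there exists a fully heterochronous ranked tree shape with $n$ leaves whose $\mathbf{F}$-matrix $F$ satisfies $F_{i,i}=f_i$ for all $0\le i\le N$.
   Context: A fully heterochronous ranked tree shape with $n$ leaves is a rooted full binary tree (every node has out-degree $0$ or $2$), without leaf labels, with $n$ leaves, together with a total ordering of all $2n-1$ nodes (leaves included) such that nodes appear in increasing order along every path from the root to a leaf; the position of a node in this order, numbered $0,1,\dots,2n-2$, is its rank (the root has rank $0$). Its $\mathbf{F}$-matrix is the $(2n-2)\times(2n-2)$ lower triangular matrix $F$, with indices running from $0$ to $2n-3$, where for $0\le j\le i$ the entry $F_{i,j}$ is the number of edges from a parent node $v$ to a child node $w$ such that the rank of $v$ is at most $j$ and the rank of $w$ is larger than $i$. *)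

From mathcomp Require Import all_boot.
Set Implicit Arguments. Unset Strict Implicit. Unset Printing Implicit Defensive.

(* A fully heterochronous ranked tree shape with n leaves is encoded by
   identifying each of its 2n-1 nodes with its rank 0..2n-2 and giving the
   parent function [par] : the parent of node v (1 <= v <= 2n-2) is [par v].
   (The value [par 0] is irrelevant.)  Since nodes are identified with their
   ranks, this encodes exactly a rooted tree together with a total order of
   its nodes, up to rank-preserving isomorphism (no leaf labels). *)

Definition nchildren (n : nat) (par : nat -> nat) (u : nat) : nat :=
  count (fun w => par w == u) (iota 1 (2 * n - 2)).

Definition is_FH_ranked_tree_shape (n : nat) (par : nat -> nat) : Prop :=
  [/\ 0 < n,
      (forall v, 0 < v < 2 * n - 1 -> par v < v),
      (forall u, u < 2 * n - 1 ->
         nchildren n par u = 0 \/ nchildren n par u = 2)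
    &
      count (fun u => nchildren n par u == 0) (iota 0 (2 * n - 1)) = n].

Definition Fmat (n : nat) (par : nat -> nat) (i j : nat) : nat :=
  count (fun w => (par w <= j) && (i < w)) (iota 1 (2 * n - 2)).

From mathcomp Require Import all_boot zify.

(* A ranked tree shape is determined by which ranks are internal nodes: let
   the j-th internal node (in rank order) have the children of ranks 2j+1 and
   2j+2.  This is a valid shape as soon as every rank w >= 1 is preceded by at
   least (w+1)/2 internal nodes, and then F_{i,i} = 2 c_i - i, where c_i is
   the number of internal nodes of rank <= i: the edges leaving ranks <= i end
   exactly at ranks 1..2c_i, and i of them end at ranks <= i.  Since
   f_i + i is even, make u <= N internal iff u = 0 or f goes up at u, so that
   2 c_i - i = f_i; then add the missing internal nodes right after N.
   Positivity of f and f_i <= 2n - i - 2 are exactly what is needed for the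
   parents to precede their children and for the count n - 1 to be reached. *)

Lemma count_iota_le a s m : count (fun w => w <= a) (iota s m) = minn (a.+1 - s) m.
Proof. by elim: m s => [|m IHm] s /=; [lia | rewrite IHm; lia]. Qed.

Lemma count_iota_itv i a s m : i <= a ->
  count (fun w => (w <= a) && (i < w)) (iota s m) =
  minn (a.+1 - s) m - minn (i.+1 - s) m.
Proof.
move=> le_ia; elim: m s => [|m IHm] s /=; first lia.
by rewrite IHm; case: (leqP s a); case: (ltnP i s); lia.
Qed.

Section TreeOfInternalNodes.

Variable internal : nat -> bool.

Definition ninternal m := count internal (iota 0 m).

Lemma ninternalS m : ninternal m.+1 = ninternal m + internal m.
Proof. by rewrite /ninternal -addn1 iotaD count_cat /= addn0. Qed.

Lemma leq_ninternal {m m'} : m <= m' -> ninternal m <= ninternal m'.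
Proof. by move=> le_mm'; rewrite /ninternal -(subnKC le_mm') iotaD count_cat leq_addr. Qed.

(* The parent of w is the unique u with 2 c_{u-1} < w <= 2 c_u. *)
Definition parent_of K w := count (fun u => 2 * ninternal u.+1 < w) (iota 0 K).

Lemma leq_parent_of K w i :
  i < K -> (parent_of K w <= i) = (w <= 2 * ninternal i.+1).
Proof.
move=> lt_iK; rewrite /parent_of.
case: (leqP w (2 * ninternal i.+1)) => le_w.
- rewrite -(subnKC (ltnW lt_iK)) iotaD count_cat add0n.
  have -> : count (fun u => 2 * ninternal u.+1 < w) (iota i (K - i)) = 0.
    apply/eqP; rewrite -leqn0 leqNgt -has_count; apply/hasPn => u.
    rewrite mem_iota => /andP[le_iu _].
    by have := leq_ninternal (le_iu : i < u.+1); lia.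
  by have := count_size (fun u => 2 * ninternal u.+1 < w) (iota 0 i); rewrite size_iota; lia.
- rewrite -(subnKC lt_iK) iotaD count_cat.
  have -> : count (fun u => 2 * ninternal u.+1 < w) (iota 0 i.+1) = i.+1.
    apply/eqP; rewrite -[X in _ == X](size_iota 0 i.+1) -all_count; apply/allP => u.
    rewrite mem_iota add0n => /andP[_ lt_ui].
    by have := leq_ninternal lt_ui; lia.
  lia.
Qed.

Variable n : nat.
Hypothesis n_gt0 : 0 < n.
Hypothesis internal_before : forall w, 1 <= w <= 2 * n - 2 -> w <= 2 * ninternal w.
Hypothesis ninternal_total : ninternal (2 * n - 1) = n.-1.

Definition tree_par := parent_of (2 * n - 1).

Lemma ninternal_lt_nodes {u} : u < 2 * n - 1 -> 2 * ninternal u.+1 <= 2 * n - 2.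
Proof. by move=> lt_u; have := leq_ninternal lt_u; lia. Qed.

Lemma tree_par_lt v : 0 < v < 2 * n - 1 -> tree_par v < v.
Proof.
case: v => // v /andP[_ lt_v]; rewrite ltnS leq_parent_of; last lia.
by apply: internal_before; lia.
Qed.

Lemma nchildren_tree_par u : u < 2 * n - 1 -> nchildren n tree_par u = (internal u).*2.
Proof.
move=> lt_u; rewrite /nchildren.
rewrite (eq_in_count (a2 := fun w => (w <= 2 * ninternal u.+1) && (2 * ninternal u < w))).
  have := ninternal_lt_nodes lt_u; have := leq_ninternal (leqnSn u).
  rewrite count_iota_itv // ninternalS; case: (internal u); lia.
move=> w; rewrite mem_iota => /andP[w_gt0 _] /=.
case: u lt_u => [|u] lt_u.
  by rewrite -leqn0 /tree_par leq_parent_of // /ninternal /= w_gt0 andbT.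
rewrite eqn_leq /tree_par leq_parent_of // ltnNge leq_parent_of; last lia.
by rewrite -ltnNge.
Qed.

Lemma tree_par_FH : is_FH_ranked_tree_shape n tree_par.
Proof.
split => //; first exact: tree_par_lt.
  by move=> u lt_u; rewrite nchildren_tree_par //; case: (internal u); auto.
rewrite (eq_in_count (a2 := predC internal)); last first.
  by move=> u; rewrite mem_iota /= => lt_u; rewrite nchildren_tree_par //; case: (internal u).
have := count_predC internal (iota 0 (2 * n - 1)).
rewrite size_iota -/(ninternal _) ninternal_total => split_nodes.
by apply/eqP; rewrite -(eqn_add2l n.-1) split_nodes; apply/eqP; lia.
Qed.

Lemma Fmat_diag_tree_par i :
  i < 2 * n - 1 -> Fmat n tree_par i i = 2 * ninternal i.+1 - i.
Proof.
move=> lt_i; rewrite /Fmat.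
rewrite (eq_in_count (a2 := fun w => (w <= 2 * ninternal i.+1) && (i < w))); last first.
  by move=> w _ /=; rewrite /tree_par leq_parent_of.
have := ninternal_lt_nodes lt_i.
have le_i : i <= 2 * ninternal i.+1.
  case: i lt_i => [|i] lt_i; first lia.
  have := internal_before i.+1; have := leq_ninternal (leqnSn i.+1); lia.
by rewrite count_iota_itv //; lia.
Qed.

End TreeOfInternalNodes.

Definition pad_internal (b : nat -> bool) N L u := if u <= N then b u else u <= N + L.

Lemma ninternal_pad_low b N L m :
  m <= N.+1 -> ninternal (pad_internal b N L) m = ninternal b m.
Proof.
move=> le_m; apply: eq_in_count => u; rewrite mem_iota /pad_internal => lt_u.
by have -> : u <= N by lia.
Qed.

Lemma ninternal_pad_high b N L j :
  ninternal (pad_internal b N L) (N.+1 + j) = ninternal b N.+1 + minn j L.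
Proof.
rewrite {1}/ninternal iotaD count_cat -/(ninternal _ _) ninternal_pad_low //.
congr (_ + _); rewrite add0n (eq_in_count (a2 := fun u => u <= N + L)).
  by rewrite count_iota_le; lia.
by move=> u; rewrite mem_iota /pad_internal => le_u; have -> : (u <= N) = false by lia.
Qed.

Section UpSteps.

Variables (n N : nat) (f : nat -> nat).
Hypothesis f_gt0 : forall i, i <= N -> 0 < f i.
Hypothesis f0 : f 0 = 2.
Hypothesis f_step : forall i, 1 <= i <= N -> f i = f i.-1 + 1 \/ f i + 1 = f i.-1.
Hypothesis f_le : forall i, i <= N -> f i + i + 2 <= 2 * n.

Definition up_step u := (u == 0) || (f u == f u.-1 + 1).

Lemma double_ninternal_up_step i : i <= N -> 2 * ninternal up_step i.+1 = f i + i.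
Proof using f0 f_step.
elim: i => [|i IHi] le_iN; first by rewrite /ninternal /= f0.
rewrite ninternalS mulnDr IHi; last lia.
by rewrite /up_step /=; case: eqP => /= up; have /= := f_step i.+1; lia.
Qed.

Definition tree_internal := pad_internal up_step N (n.-1 - ninternal up_step N.+1).

Lemma tree_internal_before w :
  1 <= w <= 2 * n - 2 -> w <= 2 * ninternal tree_internal w.
Proof using f_gt0 f0 f_step f_le.
move=> w_range; case: (leqP w N.+1) => le_w.
  case: w w_range le_w => [|i] w_range le_w; first lia.
  rewrite ninternal_pad_low // double_ninternal_up_step; last lia.
  by have := f_gt0 i; lia.
have := double_ninternal_up_step N (leqnn N); have := f_le N (leqnn N).
by rewrite -(subnKC (ltnW le_w)) ninternal_pad_high; lia.
Qed.

Lemma ninternal_tree_total : ninternal tree_internal (2 * n - 1) = n.-1.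
Proof using f_gt0 f0 f_step f_le.
have double_up := double_ninternal_up_step N (leqnn N).
have fN_le := f_le N (leqnn N).
have fN_gt0 := f_gt0 N (leqnn N).
have -> : 2 * n - 1 = N.+1 + (2 * n - 2 - N) by lia.
by rewrite ninternal_pad_high; lia.
Qed.

End UpSteps.

Theorem corollary1 (n N : nat) (f : nat -> nat) :
  N + 3 <= 2 * n ->
  (forall i, i <= N -> 0 < f i) ->
  f 0 = 2 ->
  (forall i, 1 <= i <= N -> f i = f i.-1 + 1 \/ f i + 1 = f i.-1) ->
  (forall i, i <= N -> f i + i + 2 <= 2 * n) ->
  exists par : nat -> nat,
    is_FH_ranked_tree_shape n par /\
    (forall i, i <= N -> Fmat n par i i = f i).
Proof.
move=> N_small f_gt0 f0 f_step f_le.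
have n_gt0 : 0 < n by lia.
have before := tree_internal_before n N f f_gt0 f0 f_step f_le.
have total := ninternal_tree_total n N f f_gt0 f0 f_step f_le.
have up := double_ninternal_up_step N f f0 f_step.
exists (tree_par (tree_internal n N f) n); split; first exact: tree_par_FH.
move=> i le_iN; rewrite Fmat_diag_tree_par //; last lia.
by rewrite ninternal_pad_low ?up; lia.
Qed.
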